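(* Let $p\ge 2$, $0\le t\le1$ and $u>0$. Then the $p^2\times p^2$ real matrix $B$ defined below has rank exactly $p^2-1$.
   Context: Let $p\ge 2$ be an integer, $0\le t\le 1$ and $u>0$. Consider $p^2$ unknowns $p_{i,j}$, $1\le i,j\le p$; these represent the DASEP$(3,p,2)$ stationary probabilities $\mathrm{Pd}(0,i,j)$. For $1\le i,j\le p$ define the linear form $$A_{i,j}=\big(c_{i,j}+[i>1]+[j>1]+u[i<p]+u[j<p]\big)p_{i,j}-d_{i,j}\,p_{j,i}-[i<p]\,p_{i+1,j}-[j<p]\,p_{i,j+1}-u[i>1]\,p_{i-1,j}-u[j>1]\,p_{i,j-1}.$$ Here $[\cdot]$ is the Iverson bracket. The coefficients are $c_{i,j}=2+t$ and $d_{i,j}=1+2t$ if $i<j$; $c_{i,j}=1+2t$ and $d_{i,j}=2+t$ if $i>j$; and $c_{i,i}=d_{i,i}=0$. For example, for $1<i<j<p$ this reads $A_{i,j}=(4+t+2u)p_{i,j}-(1+2t)p_{j,i}-p_{i+1,j}-p_{i,j+1}-up_{i-1,j}-up_{i,j-1}$. For $1<j<i<p$ it reads $A_{i,j}=(3+2t+2u)p_{i,j}-(2+t)p_{j,i}-p_{i+1,j}-p_{i,j+1}-up_{i-1,j}-up_{i,j-1}$. For $i=j=1$ it reads $A_{1,1}=2u\,p_{1,1}-p_{2,1}-p_{1,2}$. The matrix $B$ has rows and columns indexed by pairs, with entries $B_{p(i_1-1)+j_1,\;p(i_2-1)+j_2}$ equal to the coefficient of $p_{i_1,j_1}$ in $A_{i_2,j_2}$.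 *)

From mathcomp Require Import all_boot all_order all_algebra.
Set Implicit Arguments. Unset Strict Implicit. Unset Printing Implicit Defensive.
Import Order.TTheory GRing.Theory Num.Theory.
Local Open Scope ring_scope.

Definition iv {R : pzRingType} (b : bool) : R := if b then 1 else 0.

(* c_{i,j} and d_{i,j} (indices 1-based naturals) *)
Definition cc {R : pzRingType} (t : R) (i j : nat) : R :=
  if (i < j)%N then 2 + t else if (j < i)%N then 1 + 2 * t else 0.
Definition dd {R : pzRingType} (t : R) (i j : nat) : R :=
  if (i < j)%N then 1 + 2 * t else if (j < i)%N then 2 + t else 0.

(* Coefficient of p_{i1,j1} in the linear form A_{i2,j2} (all indices 1-based,
   in 1..p).  A_{i,j} = (c_{ij} + [i>1] + [j>1] + u[i<p] + u[j<p]) p_{ij}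
     - d_{ij} p_{ji} - [i<p] p_{i+1,j} - [j<p] p_{i,j+1}
     - u[i>1] p_{i-1,j} - u[j>1] p_{i,j-1}.
   Contributions are summed, so coinciding variables (e.g. p_{ji}=p_{ij}
   when i=j, where d_{ii}=0 anyway) are handled correctly. *)
Definition Acoef {R : pzRingType} (p : nat) (t u : R) (i1 j1 i2 j2 : nat) : R :=
  iv ((i1 == i2) && (j1 == j2)) *
     (cc t i2 j2 + iv (1 < i2)%N + iv (1 < j2)%N
      + u * iv (i2 < p)%N + u * iv (j2 < p)%N)
  - iv ((i1 == j2) && (j1 == i2)) * dd t i2 j2
  - iv ((i2 < p)%N && (i1 == i2.+1) && (j1 == j2))
  - iv ((j2 < p)%N && (i1 == i2) && (j1 == j2.+1))
  - u * iv ((1 < i2)%N && (i1 == i2.-1) && (j1 == j2))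
  - u * iv ((1 < j2)%N && (i1 == i2) && (j1 == j2.-1)).

(* The 0-based index k of 'I_(p*p) corresponds to
   the pair (i, j) with k = p(i-1) + (j-1), i.e. i = k %/ p + 1, j = k %% p + 1.
   B_{k1,k2} = coefficient of p_{i1,j1} in A_{i2,j2}. *)
Definition Bmat {R : pzRingType} (p : nat) (t u : R) : 'M[R]_(p * p) :=
  \matrix_(k1 < p * p, k2 < p * p)
    Acoef p t u (k1 %/ p).+1 (k1 %% p).+1 (k2 %/ p).+1 (k2 %% p).+1.

(* The rows of B sum to zero (every unknown occurs in the forms A_{i,j} with
   total coefficient 0) and its off-diagonal entries are nonpositive, so B
   behaves like the negated generator of a Markov chain.  If B v = 0, then at a
   maximum of v the zero row sum forces v to take the same maximal value at
   every index reached by a strictly negative entry.  Since u > 0, the negative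
   entries link every cell (i, j) of the p x p grid with its four neighbours,
   so v is constant: the right kernel of B is spanned by the all-ones vector
   and the rank is p^2 - 1. *)
From mathcomp Require Import all_boot all_order all_algebra.
From mathcomp Require Import zify ring lra.

Set Implicit Arguments.
Unset Strict Implicit.
Unset Printing Implicit Defensive.

Import Order.TTheory GRing.Theory Num.Theory.
Local Open Scope ring_scope.

Section ZeroRowSumMatrix.
Variables (R : realFieldType) (n : nat) (A : 'M[R]_n).
Hypothesis row_sum0 : forall i, \sum_j A i j = 0.
Hypothesis offdiag_le0 : forall i j, i != j -> A i j <= 0.

Lemma kernel_max_propagates (v : 'cV[R]_n) i j :
  A *m v = 0 -> (forall k, v k 0 <= v i 0) -> A i j < 0 -> v j 0 = v i 0.
Proof.
move=> Av0 vmax Aij_lt0.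
have sum0 : \sum_k A i k * (v k 0 - v i 0) = 0.
  under eq_bigr do rewrite mulrBr.
  rewrite sumrB -mulr_suml row_sum0 mul0r subr0.
  by have := congr1 (fun w : 'cV[R]_n => w i 0) Av0; rewrite !mxE.
have ge0 k : predT k -> 0 <= A i k * (v k 0 - v i 0).
  move=> _; case: (eqVneq i k) => [<-|/offdiag_le0]; first by rewrite subrr mulr0.
  by have := vmax k; nra.
move/eqP: (psumr_eq0P ge0 sum0 (i := j) isT); rewrite mulf_eq0 subr_eq0.
by case/orP=> /eqP // Aij0; move: Aij_lt0; rewrite Aij0 ltxx.
Qed.

Lemma rank_const_kernel : (0 < n)%N ->
  (forall v : 'cV[R]_n, A *m v = 0 -> exists c, v = const_mx c) ->
  \rank A = n.-1.
Proof.
move=> n_gt0 ker_const.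
pose e : 'rV[R]_n := const_mx 1.
set K := kermx A^T.
have eA : e *m A^T = 0.
  apply/rowP => i; rewrite !mxE -[RHS](row_sum0 i).
  by apply: eq_bigr => j _; rewrite !mxE mul1r.
have K_sub_e : (K <= e)%MS.
  apply/row_subP => i.
  have /ker_const [c cE] : A *m (row i K)^T = 0.
    by rewrite -[A]trmxK -trmx_mul -row_mul mulmx_ker row0 trmx0.
  have -> : row i K = c *: e.
    by apply/rowP => k; rewrite -[row i K]trmxK cE !mxE mulr1.
  exact: scalemx_sub.
have rank_e : \rank e = 1%N.
  rewrite rank_rV; apply/eqP; rewrite eqb1; apply/eqP.
  by move/rowP/(_ (Ordinal n_gt0)); rewrite !mxE; apply/eqP; rewrite oner_eq0.
have rank_K : \rank K = 1%N.
  apply/eqP; rewrite eqn_leq -{1}rank_e mxrankS //= -rank_e.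
  exact/mxrankS/sub_kermxP.
have := mxrank_ker A^T; rewrite -/K rank_K mxrank_tr.
by have := rank_leq_row A; lia.
Qed.

End ZeroRowSumMatrix.

Lemma grid_invariant (p : nat) (P : nat -> nat -> Prop) :
  (forall a b, (a.+1 < p)%N -> (b < p)%N -> P a.+1 b <-> P a b) ->
  (forall a b, (a < p)%N -> (b.+1 < p)%N -> P a b.+1 <-> P a b) ->
  forall a b, (a < p)%N -> (b < p)%N -> P a b <-> P 0%N 0%N.
Proof.
move=> vert horiz a b a_lt b_lt.
have col0 a' : (a' < p)%N -> P a' 0%N <-> P 0%N 0%N.
  elim: a' => [//|a' IH] a'_lt.
  by apply: iff_trans (vert _ _ _ _) (IH _); lia.
elim: b b_lt => [|b IH] b_lt; first exact: col0.
by apply: iff_trans (horiz _ _ _ _) (IH _); lia.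
Qed.

Section IversonSums.
Variable R : pzRingType.

Lemma big_nat_iv_pick (p m : nat) (c : bool) (g : nat -> R) (P : nat -> bool) :
  (forall a, (a < p)%N -> P a = c && (a == m)) -> (c -> (m < p)%N) ->
  \sum_(0 <= a < p) iv (P a) * g a = iv c * g m.
Proof.
move=> PE m_lt.
have P0 a : (a < p)%N -> a != m -> iv (P a) * g a = 0.
  by move=> a_lt a_neq; rewrite PE // (negbTE a_neq) andbF /iv mul0r.
case: c m_lt PE => [/(_ isT) m_lt|_] PE; last first.
  rewrite /iv mul0r big1_seq // => a; rewrite mem_index_iota /= => a_lt.
  by rewrite PE //= mul0r.
rewrite (bigD1_seq (r := index_iota 0 p) m) ?iota_uniq ?mem_index_iota //=.
rewrite PE // eqxx big1_seq ?addr0 // => a; rewrite mem_index_iota /=.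
by case/andP=> a_neq a_lt; apply: P0.
Qed.

Lemma big_nat2_iv_pick (p m n : nat) (c : bool) (g : nat -> nat -> R)
    (P : nat -> nat -> bool) :
  (forall a b, (a < p)%N -> (b < p)%N -> P a b = [&& c, a == m & b == n]) ->
  (c -> (m < p)%N && (n < p)%N) ->
  \sum_(0 <= a < p) \sum_(0 <= b < p) iv (P a b) * g a b = iv c * g m n.
Proof.
move=> PE mn_lt.
rewrite (eq_big_nat _ _ (F2 := fun a => iv (c && (a == m)) * g a n)).
  by apply: big_nat_iv_pick => // /mn_lt /andP [].
move=> a /andP [_ a_lt]; apply: big_nat_iv_pick => [b b_lt|].
  by rewrite PE // andbA.
by case/andP=> /mn_lt /andP [].
Qed.

End IversonSums.

Ltac expand_acoef :=
  rewrite /Acoef /cc /dd /iv;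
  repeat match goal with |- context [if ?b then _ else _] =>
    case: (boolP b) => ?; try (exfalso; lia) end.

Lemma Acoef_row_sum (R : comPzRingType) (p : nat) (t u : R) (a1 b1 : nat) :
  (a1 < p)%N -> (b1 < p)%N ->
  \sum_(0 <= a < p) \sum_(0 <= b < p) Acoef p t u a1.+1 b1.+1 a.+1 b.+1 = 0.
Proof.
move=> a1_lt b1_lt.
(* Each term as [iv condition * coefficient], the shape big_nat2_iv_pick sums. *)
have AcoefE a b : Acoef p t u a1.+1 b1.+1 a.+1 b.+1 =
    iv ((a1.+1 == a.+1) && (b1.+1 == b.+1)) *
      (cc t a.+1 b.+1 + iv (1 < a.+1)%N + iv (1 < b.+1)%N
       + u * iv (a.+1 < p)%N + u * iv (b.+1 < p)%N)
    - iv ((a1.+1 == b.+1) && (b1.+1 == a.+1)) * dd t a.+1 b.+1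
    - iv ((a.+1 < p)%N && (a1.+1 == a.+2) && (b1.+1 == b.+1)) * 1
    - iv ((b.+1 < p)%N && (a1.+1 == a.+1) && (b1.+1 == b.+2)) * 1
    - iv ((1 < a.+1)%N && (a1.+1 == a) && (b1.+1 == b.+1)) * u
    - iv ((1 < b.+1)%N && (a1.+1 == a.+1) && (b1.+1 == b)) * u.
  by rewrite /Acoef; ring.
under eq_bigr => a _ do under eq_bigr => b _ do rewrite AcoefE.
under eq_bigr => a _ do rewrite !sumrB.
rewrite !sumrB.
rewrite (@big_nat2_iv_pick _ p a1 b1 true); [|lia|lia].
rewrite (@big_nat2_iv_pick _ p b1 a1 true); [|lia|lia].
rewrite (@big_nat2_iv_pick _ p a1.-1 b1 (0 < a1)%N); [|lia|lia].
rewrite (@big_nat2_iv_pick _ p a1 b1.-1 (0 < b1)%N); [|lia|lia].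
rewrite (@big_nat2_iv_pick _ p a1.+1 b1 (a1.+1 < p)%N); [|lia|lia].
rewrite (@big_nat2_iv_pick _ p a1 b1.+1 (b1.+1 < p)%N); [|lia|lia].
by expand_acoef; ring.
Qed.

Section GridMatrix.
Variables (R : realFieldType) (p : nat) (t u : R).

Lemma Acoef_vert_lt0 a b : 0 < u -> (a.+1 < p)%N ->
  Acoef p t u a.+1 b.+1 a.+2 b.+1 < 0 /\ Acoef p t u a.+2 b.+1 a.+1 b.+1 < 0.
Proof. by move=> u_gt0 a_lt; split; expand_acoef; lra. Qed.

Lemma Acoef_horiz_lt0 a b : 0 < u -> (b.+1 < p)%N ->
  Acoef p t u a.+1 b.+1 a.+1 b.+2 < 0 /\ Acoef p t u a.+1 b.+2 a.+1 b.+1 < 0.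
Proof. by move=> u_gt0 b_lt; split; expand_acoef; lra. Qed.

Hypothesis p_gt0 : (0 < p)%N.

Fact pp_gt0 : (0 < p * p)%N. Proof. by rewrite muln_gt0 p_gt0. Qed.

(* The index of the unknown p_{a+1,b+1}; the default is only reached when a or b >= p. *)
Definition cell (a b : nat) : 'I_(p * p) := insubd (Ordinal pp_gt0) (a * p + b)%N.

Lemma val_cell a b : (a < p)%N -> (b < p)%N -> val (cell a b) = (a * p + b)%N.
Proof. by move=> a_lt b_lt; rewrite val_insubd ifT //; nia. Qed.

Lemma cellK (k : 'I_(p * p)) : cell (k %/ p) (k %% p) = k.
Proof.
apply: val_inj; rewrite val_cell -?divn_eq ?ltn_pmod //.
by rewrite ltn_divLR.
Qed.

Lemma cell_coord_lt (k : 'I_(p * p)) : (k %/ p < p)%N /\ (k %% p < p)%N.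
Proof. by rewrite ltn_divLR ?ltn_pmod. Qed.

Lemma Bmat_cell a1 b1 a2 b2 :
  (a1 < p)%N -> (b1 < p)%N -> (a2 < p)%N -> (b2 < p)%N ->
  Bmat p t u (cell a1 b1) (cell a2 b2) = Acoef p t u a1.+1 b1.+1 a2.+1 b2.+1.
Proof.
move=> a1_lt b1_lt a2_lt b2_lt; rewrite mxE !val_cell //.
by rewrite !divnMDl ?divn_small ?addn0 ?modnMDl ?modn_small.
Qed.

Lemma sum_cells (F : 'I_(p * p) -> R) :
  \sum_k F k = \sum_(0 <= a < p) \sum_(0 <= b < p) F (cell a b).
Proof.
transitivity (\sum_(0 <= k < p * p) F (insubd (Ordinal pp_gt0) k)).
  by rewrite big_mkord; apply: eq_bigr => k _; rewrite valKd.
rewrite big_nat_mul; apply: eq_bigr => a _.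
rewrite -[(a * p)%N]add0n big_addn mulSnr addKn.
by apply: eq_bigr => b _; rewrite /cell addnC.
Qed.

Lemma Bmat_row_sum0 k : \sum_l Bmat p t u k l = 0.
Proof.
have [a_lt b_lt] := cell_coord_lt k.
rewrite -(cellK k) sum_cells -[RHS](Acoef_row_sum t u a_lt b_lt).
apply: eq_big_nat => a /andP [_ a'_lt]; apply: eq_big_nat => b /andP [_ b'_lt].
exact: Bmat_cell.
Qed.

Lemma Bmat_offdiag_le0 k1 k2 : 0 <= t -> 0 <= u -> k1 != k2 ->
  Bmat p t u k1 k2 <= 0.
Proof.
move=> t_ge0 u_ge0 k12; rewrite mxE /Acoef.
have -> : ((k1 %/ p).+1 == (k2 %/ p).+1) && ((k1 %% p).+1 == (k2 %% p).+1) = false.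
  apply/negbTE; apply: contra k12 => /andP [/eqP [eq_div] /eqP [eq_mod]].
  by rewrite -(cellK k1) -(cellK k2) eq_div eq_mod.
have dd_ge0 i j : 0 <= dd t i j.
  by rewrite /dd; case: ifP => _; [|case: ifP => _]; lra.
have iv_ge0 (b : bool) : 0 <= iv b :> R by case: b; rewrite /iv ?ler01.
by rewrite {1}/iv mul0r sub0r -!opprD oppr_le0 !addr_ge0 ?mulr_ge0.
Qed.

Lemma Bmat_kernel_const (v : 'cV[R]_(p * p)) : 0 <= t -> 0 < u ->
  Bmat p t u *m v = 0 -> exists c, v = const_mx c.
Proof.
move=> t_ge0 u_gt0 Bv0.
have [km _ vmax] := @arg_maxP _ _ _ (Ordinal pp_gt0) predT (fun k => v k 0) isT.
exists (v km 0); apply/colP => k; rewrite mxE.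
pose P a b := v (cell a b) 0 = v km 0.
have step a b a' b' : (a < p)%N -> (b < p)%N -> (a' < p)%N -> (b' < p)%N ->
    Acoef p t u a.+1 b.+1 a'.+1 b'.+1 < 0 -> P a b -> P a' b'.
  move=> a_lt b_lt a'_lt b'_lt A_lt0 Pab; rewrite /P -Pab.
  apply: (kernel_max_propagates Bmat_row_sum0) Bv0 _ _.
  - by move=> i j; apply: Bmat_offdiag_le0 => //; exact: ltW.
  - by move=> l; rewrite Pab; apply: vmax.
  - by rewrite Bmat_cell.
have P00 a b : (a < p)%N -> (b < p)%N -> P a b <-> P 0%N 0%N.
  apply: grid_invariant => {a b} a b a_lt b_lt.
    have [down up] := Acoef_vert_lt0 b u_gt0 a_lt.
    by split; apply: step => //; lia.
  have [right left] := Acoef_horiz_lt0 a u_gt0 b_lt.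
  by split; apply: step => //; lia.
have [a_lt b_lt] := cell_coord_lt k; have [am_lt bm_lt] := cell_coord_lt km.
by rewrite -(cellK k); apply/(P00 _ _ a_lt b_lt)/(P00 _ _ am_lt bm_lt); rewrite /P cellK.
Qed.

End GridMatrix.

Theorem mainTheorem4 (R : realFieldType) (p : nat) (t u : R) :
  (2 <= p)%N -> 0 <= t -> t <= 1 -> 0 < u ->
  \rank (Bmat p t u) = (p * p).-1.
Proof.
move=> p_ge2 t_ge0 _ u_gt0.
have p_gt0 : (0 < p)%N by lia.
apply: rank_const_kernel (Bmat_row_sum0 t u p_gt0) (pp_gt0 p_gt0) _ => v.
exact: Bmat_kernel_const.
Qed.
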